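(* Let $n\ge4$, let $0<\alpha_2,\alpha_3<1$, $\alpha_1=1-\alpha_2-\alpha_3$, and $\lambda^*=\big(\frac{n-1+\alpha_1}{n},\frac{\alpha_2}{n},\frac{\alpha_3}{n}\big)$. Let $i_1$ be an integer with $0\le i_1\le n-4$ and $n-i_1$ even, and let $\mathfrak{p}(i_1)=|l_i(\lambda^* )|$ for $i=\big(i_1,\frac{n-i_1}{2},\frac{n-i_1}{2}\big)$. Then $$\mathfrak{p}(i_1)\le\frac{1}{e(\ln n-1)}\cdot\frac{\Gamma(n+1)}{i_1!\,\Gamma(n-i_1)}\cdot\frac{4\alpha_2(1-\alpha_2)}{(n-i_1)(n-i_1-1)}.$$
   Context: For an integer $n\ge1$ let $I=\{i=(i_1,i_2,i_3)\in\mathbb{Z}_+^3: i_1+i_2+i_3=n\}$ and $l_i(\lambda)=\prod_{s=1}^{3}\frac{1}{i_s!}\prod_{t=0}^{i_s-1}(n\lambda_s-t)$ for $\lambda=(\lambda_1,\lambda_2,\lambda_3)$ (Lagrange fundamental polynomials for the equally spaced nodes $i/n$ of a triangle in barycentric coordinates). *)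

From Stdlib Require Import Reals Lra Lia Arith.
Open Scope R_scope.

Fixpoint fallp (x : R) (k : nat) : R :=
  match k with
  | O => 1
  | S k' => fallp x k' * (x - INR k')
  end.

Definition lfac (n : nat) (lam : R) (k : nat) : R :=
  fallp (INR n * lam) k / INR (fact k).

(* Lagrange fundamental polynomial l_i(lambda), i = (i1,i2,i3), lambda = (l1,l2,l3) *)
Definition lagr (n i1 i2 i3 : nat) (l1 l2 l3 : R) : R :=
  lfac n l1 i1 * lfac n l2 i2 * lfac n l3 i3.

From Stdlib Require Import Reals Lra Lia Arith.
Open Scope R_scope.

(* At lambda* the three factors of l_i are falling factorials of n - a2 - a3, a2 and a3.
   For 0 < a < 1 and m = (n - i1)/2 one has |(a)_m| / m! = (a/m) prod_{1<=j<m} (1 - a/j), and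
   the product is at most 1 - a and at most exp(-a ln m).  Each factor j - a2 - a3 of the
   first falling factorial is at most j (1 - a3/j), so that factor is at most
   n!/(2m)! exp(-a3 ln((n+1)/(2m+1))).  The a3-exponents combine to exp(-a3 L) with
   L >= ln n - 1 (as 2m + 1 <= e m), and a3 exp(-a3 L) <= 1/(e L) whatever a3 is. *)

Lemma exp_le_compat x y : x <= y -> exp x <= exp y.
Proof. intros [Hlt | ->]; [left; apply exp_increasing |]; lra. Qed.

Lemma ln_le_compat x y : 0 < x -> x <= y -> ln x <= ln y.
Proof. intros Hx [Hlt | ->]; [left; apply ln_increasing |]; lra. Qed.

Lemma exp_1_mul_le_exp y : exp 1 * y <= exp y.
Proof.
  replace (exp y) with (exp 1 * exp (y - 1)) by (rewrite <- exp_plus; f_equal; ring).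
  apply Rmult_le_compat_l; [left; apply exp_pos |].
  pose proof (exp_ineq1_le (y - 1)); lra.
Qed.

Lemma exp_1_ge_5_2 : 5 / 2 <= exp 1.
Proof.
  replace (exp 1) with (exp (1 / 8) ^ 8)
    by (simpl; rewrite Rmult_1_r, <- !exp_plus; f_equal; field).
  pose proof (exp_ineq1_le (1 / 8)).
  apply Rle_trans with ((9 / 8) ^ 8); [simpl; lra | apply pow_incr; lra].
Qed.

Lemma ln_succ_sub_le x : 0 < x -> ln (x + 1) - ln x <= 1 / x.
Proof.
  intro Hx.
  assert (Hle : x + 1 <= exp (ln x + 1 / x)).
  { rewrite exp_plus, exp_ln by exact Hx.
    pose proof (exp_ineq1_le (1 / x)).
    replace (x + 1) with (x * (1 + 1 / x)) by (field; lra).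
    apply Rmult_le_compat_l; lra. }
  apply ln_le_compat in Hle; [| lra].
  rewrite ln_exp in Hle; lra.
Qed.

Lemma one_sub_div_le_exp a x : 0 < x -> 0 <= a ->
  1 - a / x <= exp (- a * (ln (x + 1) - ln x)).
Proof.
  intros Hx Ha.
  apply Rle_trans with (exp (- (a / x))); [pose proof (exp_ineq1_le (- (a / x))); lra |].
  apply exp_le_compat.
  assert (a * (ln (x + 1) - ln x) <= a * (1 / x))
    by (apply Rmult_le_compat_l; [| apply ln_succ_sub_le]; lra).
  replace (a / x) with (a * (1 / x)) by (field; lra); lra.
Qed.

Lemma ln_double_succ_sub_le x : 2 <= x -> ln (2 * x + 1) - ln x <= 1.
Proof.
  intro Hx.
  assert (Hle : 2 * x + 1 <= exp (ln x + 1)).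
  { rewrite exp_plus, exp_ln by lra. pose proof exp_1_ge_5_2. nra. }
  apply ln_le_compat in Hle; [| lra].
  rewrite ln_exp in Hle; lra.
Qed.

(* The maximum of a |-> a exp(-a L) is attained at a = 1/L. *)
Lemma mul_exp_neg_le a L : 0 <= a -> 0 < L -> a * exp (- a * L) <= 1 / (exp 1 * L).
Proof.
  intros Ha HL.
  pose proof (exp_1_mul_le_exp (a * L)). pose proof (exp_pos 1).
  assert (Hinv : exp (a * L) * exp (- a * L) = 1)
    by (rewrite <- exp_plus, <- exp_0; f_equal; ring).
  apply Rmult_le_reg_r with (exp 1 * L); [nra |].
  replace (1 / (exp 1 * L) * (exp 1 * L)) with 1 by (field; lra).
  replace (a * exp (- a * L) * (exp 1 * L)) with (exp 1 * (a * L) * exp (- a * L)) by ring.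
  apply Rle_trans with (exp (a * L) * exp (- a * L)); [| lra].
  apply Rmult_le_compat_r; [left; apply exp_pos | lra].
Qed.

Lemma one_lt_ln x : 3 < x -> 1 < ln x.
Proof.
  intro Hx. pose proof exp_le_3.
  rewrite <- (ln_exp 1). apply ln_increasing; [apply exp_pos | lra].
Qed.

Lemma exp_decay_le a M n : 0 <= a -> 2 <= M -> 2 * M <= n ->
  a * (exp (- a * (ln (n + 1) - ln (2 * M + 1))) * exp (- a * ln M))
  <= 1 / (exp 1 * (ln n - 1)).
Proof.
  intros Ha HM Hn.
  set (L := ln (n + 1) - ln (2 * M + 1) + ln M).
  assert (HnL : ln n - 1 <= L).
  { pose proof (ln_le_compat n (n + 1) ltac:(lra) ltac:(lra)).
    pose proof (ln_double_succ_sub_le M HM). unfold L; lra. }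
  assert (Hpos : 0 < ln n - 1) by (pose proof (one_lt_ln n ltac:(lra)); lra).
  rewrite <- exp_plus.
  replace (- a * (ln (n + 1) - ln (2 * M + 1)) + - a * ln M) with (- a * L) by (unfold L; ring).
  apply Rle_trans with (1 / (exp 1 * L)); [apply mul_exp_neg_le; lra |].
  pose proof (exp_pos 1).
  unfold Rdiv; rewrite !Rmult_1_l.
  apply Rinv_le_contravar; [| apply Rmult_le_compat_l]; nra.
Qed.

Lemma fallp_S_l x k : fallp x (S k) = x * fallp (x - 1) k.
Proof.
  induction k as [| k IHk]; [simpl; ring |].
  change (fallp x (S (S k))) with (fallp x (S k) * (x - INR (S k))).
  rewrite IHk, S_INR; simpl; ring.
Qed.

Lemma fallp_nonneg x k : INR k - 1 <= x -> 0 <= fallp x k.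
Proof.
  induction k as [| k IHk]; intro Hx; simpl; [lra |].
  rewrite S_INR in Hx. pose proof (pos_INR k).
  apply Rmult_le_pos; [apply IHk |]; lra.
Qed.

Lemma fallp_shift_le i c s a : 0 <= a <= s -> s <= INR c + 1 ->
  fallp (INR (i + c) - s) i
  <= INR (fact (i + c)) / INR (fact c) * exp (- a * (ln (INR (i + c) + 1) - ln (INR c + 1))).
Proof.
  intros Has Hs. induction i as [| i IHi].
  { simpl. rewrite Rminus_diag, Rmult_0_r, exp_0. right; field. apply INR_fact_neq_0. }
  replace (S i + c)%nat with (S (i + c)) by lia.
  rewrite fallp_S_l, fact_simpl, mult_INR, !S_INR.
  replace (INR (i + c) + 1 - s - 1) with (INR (i + c) - s) by ring.
  set (J := INR (i + c) + 1).
  assert (HJ : 1 <= J) by (pose proof (pos_INR (i + c)); unfold J; lra).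
  assert (Htop : J - s <= J * exp (- a * (ln (J + 1) - ln J))).
  { apply Rle_trans with (J * (1 - a / J));
      [replace (J * (1 - a / J)) with (J - a) by (field; lra); lra |].
    apply Rmult_le_compat_l; [lra | apply one_sub_div_le_exp; lra]. }
  assert (Hlow : 0 <= fallp (INR (i + c) - s) i).
  { apply fallp_nonneg. rewrite plus_INR. pose proof (pos_INR i); lra. }
  assert (Hs' : 0 <= J - s) by (unfold J; rewrite plus_INR; pose proof (pos_INR i); lra).
  apply Rle_trans with (J * exp (- a * (ln (J + 1) - ln J)) *
     (INR (fact (i + c)) / INR (fact c) * exp (- a * (ln J - ln (INR c + 1))))).
  { apply Rmult_le_compat; auto. }
  replace (- a * (ln (J + 1) - ln (INR c + 1)))
    with (- a * (ln (J + 1) - ln J) + - a * (ln J - ln (INR c + 1))) by ring.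
  rewrite exp_plus. right. field. apply INR_fact_neq_0.
Qed.

Fixpoint prod_one_sub_div (a : R) (k : nat) : R :=
  match k with
  | O => 1
  | S k' => prod_one_sub_div a k' * (1 - a / INR (S k'))
  end.

Lemma Rabs_fallp_S a k : 0 < a < 1 ->
  Rabs (fallp a (S k)) = a * INR (fact k) * prod_one_sub_div a k.
Proof.
  intro Ha. induction k as [| k IHk].
  { simpl. rewrite Rabs_pos_eq; lra. }
  change (fallp a (S (S k))) with (fallp a (S k) * (a - INR (S k))).
  rewrite Rabs_mult, IHk, Rabs_left by (rewrite S_INR; pose proof (pos_INR k); lra).
  change (prod_one_sub_div a (S k)) with (prod_one_sub_div a k * (1 - a / INR (S k))).
  rewrite fact_simpl, mult_INR, S_INR.
  field. pose proof (pos_INR k); lra.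
Qed.

Lemma one_sub_div_succ_bounds a k : 0 <= a <= 1 -> 0 <= 1 - a / INR (S k) <= 1.
Proof.
  intro Ha. rewrite S_INR. pose proof (pos_INR k).
  assert (0 <= a / (INR k + 1) <= 1).
  { split; [apply Rmult_le_pos; [| left; apply Rinv_0_lt_compat]; lra |].
    apply Rmult_le_reg_r with (INR k + 1); [lra |]. field_simplify; lra. }
  lra.
Qed.

Lemma prod_one_sub_div_nonneg a k : 0 <= a <= 1 -> 0 <= prod_one_sub_div a k.
Proof.
  intro Ha. induction k as [| k IHk]; simpl; [lra |].
  apply Rmult_le_pos; [exact IHk | apply one_sub_div_succ_bounds; exact Ha].
Qed.

Lemma prod_one_sub_div_le_one_sub a k : 0 <= a <= 1 -> (1 <= k)%nat ->
  prod_one_sub_div a k <= 1 - a.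
Proof.
  intros Ha Hk. induction k as [| k IHk]; [lia |].
  destruct k as [| k]; [simpl; lra |].
  change (prod_one_sub_div a (S (S k)))
    with (prod_one_sub_div a (S k) * (1 - a / INR (S (S k)))).
  pose proof (prod_one_sub_div_nonneg a (S k) Ha).
  pose proof (one_sub_div_succ_bounds a (S k) Ha).
  replace (1 - a) with ((1 - a) * 1) by ring.
  apply Rmult_le_compat; try lra. apply IHk; lia.
Qed.

Lemma prod_one_sub_div_le_exp a k : 0 <= a <= 1 ->
  prod_one_sub_div a k <= exp (- a * ln (INR k + 1)).
Proof.
  intro Ha. induction k as [| k IHk].
  { simpl. rewrite Rplus_0_l, ln_1, Rmult_0_r, exp_0; lra. }
  change (prod_one_sub_div a (S k)) with (prod_one_sub_div a k * (1 - a / INR (S k))).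
  pose proof (prod_one_sub_div_nonneg a k Ha).
  pose proof (one_sub_div_succ_bounds a k Ha).
  rewrite S_INR in *. pose proof (pos_INR k).
  apply Rle_trans with (exp (- a * ln (INR k + 1))
                        * exp (- a * (ln (INR k + 1 + 1) - ln (INR k + 1)))).
  { apply Rmult_le_compat; try lra. apply one_sub_div_le_exp; lra. }
  rewrite <- exp_plus. right. f_equal. ring.
Qed.

Lemma lfac_scaled n x k : (0 < n)%nat -> lfac n (x / INR n) k = fallp x k / INR (fact k).
Proof.
  intro Hn. unfold lfac. f_equal. f_equal.
  field. apply not_0_INR; lia.
Qed.

Lemma Rabs_lfac_scaled_S n a k : (0 < n)%nat -> 0 < a < 1 ->
  Rabs (lfac n (a / INR n) (S k)) = a * prod_one_sub_div a k / INR (S k).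
Proof.
  intros Hn Ha.
  rewrite lfac_scaled by exact Hn.
  unfold Rdiv. rewrite Rabs_mult, Rabs_inv, Rabs_fallp_S by exact Ha.
  rewrite (Rabs_pos_eq (INR (fact (S k)))) by (left; apply INR_fact_lt_0).
  rewrite fact_simpl, mult_INR. field.
  split; [apply not_0_INR; lia | apply INR_fact_neq_0].
Qed.

Lemma fallp_mul_prod_one_sub_div_le i1 m s a : (1 <= m)%nat -> 0 <= a <= 1 -> a <= s <= 2 ->
  fallp (INR (i1 + 2 * S m) - s) i1 * (a * prod_one_sub_div a m)
  <= INR (fact (i1 + 2 * S m)) / INR (fact (2 * S m))
     * (1 / (exp 1 * (ln (INR (i1 + 2 * S m)) - 1))).
Proof.
  intros Hm Ha Hs.
  set (c := (2 * S m)%nat). set (M := INR (S m)).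
  assert (HM : 2 <= M) by (unfold M; rewrite S_INR; pose proof (le_INR 1 m Hm); simpl in *; lra).
  assert (Hc : INR c = 2 * M) by (unfold c; rewrite mult_INR; reflexivity).
  assert (HcN : 2 * M <= INR (i1 + c)) by (rewrite plus_INR; pose proof (pos_INR i1); lra).
  pose proof (fallp_shift_le i1 c s a ltac:(lra) ltac:(lra)) as Hfallp.
  pose proof (fallp_nonneg (INR (i1 + c) - s) i1 ltac:(rewrite plus_INR; lra)) as Hfallp0.
  pose proof (prod_one_sub_div_le_exp a m Ha) as Hprod.
  pose proof (prod_one_sub_div_nonneg a m Ha) as Hprod0.
  pose proof (exp_decay_le a M (INR (i1 + c)) ltac:(lra) HM HcN) as Hdecay.
  rewrite Hc in Hfallp. rewrite <- S_INR in Hprod. fold M in Hprod.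
  assert (HNc : 0 <= INR (fact (i1 + c)) / INR (fact c)).
  { apply Rmult_le_pos; [apply pos_INR | left; apply Rinv_0_lt_compat, INR_fact_lt_0]. }
  eapply Rle_trans; [apply Rmult_le_compat; [| apply Rmult_le_pos | exact Hfallp |
                      apply Rmult_le_compat_l; [| exact Hprod]]; lra |].
  rewrite Rmult_assoc. apply Rmult_le_compat_l; [exact HNc |].
  replace (exp (- a * (ln (INR (i1 + c) + 1) - ln (2 * M + 1))) * (a * exp (- a * ln M)))
    with (a * (exp (- a * (ln (INR (i1 + c) + 1) - ln (2 * M + 1))) * exp (- a * ln M))) by ring.
  exact Hdecay.
Qed.

Lemma Rabs_lagr_lambda_star_le n i1 m a2 a3 : n = (i1 + 2 * S m)%nat -> (1 <= m)%nat ->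
  0 < a2 < 1 -> 0 < a3 < 1 ->
  Rabs (lagr n i1 (S m) (S m) ((INR n - 1 + (1 - a2 - a3)) / INR n) (a2 / INR n) (a3 / INR n))
  <= 1 / (exp 1 * (ln (INR n) - 1)) * (INR (fact n) / (INR (fact i1) * INR (fact (2 * S m))))
     * (a2 * (1 - a2) / INR (S m) ^ 2).
Proof.
  intros -> Hm Ha2 Ha3.
  replace (INR (i1 + 2 * S m) - 1 + (1 - a2 - a3)) with (INR (i1 + 2 * S m) - (a2 + a3)) by ring.
  unfold lagr. rewrite !Rabs_mult, !Rabs_lfac_scaled_S, lfac_scaled by (lia || lra).
  pose proof (fallp_mul_prod_one_sub_div_le i1 m (a2 + a3) a3 Hm ltac:(lra) ltac:(lra)) as Hkey.
  set (F := fallp _ i1) in *.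
  assert (HF : 0 <= F).
  { apply fallp_nonneg. rewrite plus_INR.
    pose proof (le_INR 1 (2 * S m) ltac:(lia)). rewrite INR_1 in *. lra. }
  pose proof (prod_one_sub_div_le_one_sub a2 m ltac:(lra) Hm) as Hq2.
  pose proof (prod_one_sub_div_nonneg a2 m ltac:(lra)) as Hq2'.
  pose proof (prod_one_sub_div_nonneg a3 m ltac:(lra)) as Hq3'.
  assert (HM : 0 < INR (S m)) by (apply lt_0_INR; lia).
  pose proof (INR_fact_lt_0 i1). pose proof (INR_fact_lt_0 (2 * S m)).
  rewrite Rabs_pos_eq by (apply Rmult_le_pos; [| left; apply Rinv_0_lt_compat]; lra).
  replace (F / INR (fact i1) * (a2 * prod_one_sub_div a2 m / INR (S m))
           * (a3 * prod_one_sub_div a3 m / INR (S m)))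
    with (F * (a3 * prod_one_sub_div a3 m) * (a2 * prod_one_sub_div a2 m)
          / (INR (fact i1) * INR (S m) ^ 2)) by (field; lra).
  set (E := 1 / (exp 1 * (ln (INR (i1 + 2 * S m)) - 1))) in *.
  set (N := INR (fact (i1 + 2 * S m))) in *.
  replace (E * (N / (INR (fact i1) * INR (fact (2 * S m)))) * (a2 * (1 - a2) / INR (S m) ^ 2))
    with (N / INR (fact (2 * S m)) * E * (a2 * (1 - a2)) / (INR (fact i1) * INR (S m) ^ 2))
    by (field; lra).
  apply Rmult_le_compat_r; [left; apply Rinv_0_lt_compat, Rmult_lt_0_compat; nra |].
  apply Rmult_le_compat; [| apply Rmult_le_pos; lra | exact Hkey | apply Rmult_le_compat_l; lra].
  apply Rmult_le_pos; [| apply Rmult_le_pos]; lra.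
Qed.

Lemma inv_fact_double_mul_sq_le m :
  / (INR (fact (2 * S m)) * INR (S m) ^ 2)
  <= 4 / (INR (fact (2 * S m - 1)) * (INR (2 * S m) * INR (2 * S m - 1))).
Proof.
  replace (2 * S m)%nat with (S (S (2 * m))) by lia.
  rewrite Nat.sub_succ, Nat.sub_0_r, fact_simpl, mult_INR.
  pose proof (INR_fact_lt_0 (S (2 * m))) as HD.
  set (D := INR (fact (S (2 * m)))) in *.
  rewrite !S_INR, mult_INR. pose proof (pos_INR m).
  replace (INR 2) with 2 by (simpl; ring).
  replace (4 / (D * ((2 * INR m + 1 + 1) * (2 * INR m + 1))))
    with (/ (D * ((2 * INR m + 1 + 1) * (2 * INR m + 1)) / 4)) by (field; nra).
  apply Rinv_le_contravar; [nra |].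
  replace (D * ((2 * INR m + 1 + 1) * (2 * INR m + 1)) / 4)
    with ((2 * INR m + 1 + 1) * D * ((2 * INR m + 1) / 4)) by field.
  apply Rmult_le_compat_l; nra.
Qed.

Theorem lemma21 (n i1 : nat) (a2 a3 : R) :
  (4 <= n)%nat ->
  0 < a2 < 1 -> 0 < a3 < 1 ->
  (i1 <= n - 4)%nat ->
  Nat.Even (n - i1) ->
  Rabs (lagr n i1 ((n - i1) / 2) ((n - i1) / 2)
          ((INR n - 1 + (1 - a2 - a3)) / INR n) (a2 / INR n) (a3 / INR n))
  <= 1 / (exp 1 * (ln (INR n) - 1))
     * (INR (fact n) / (INR (fact i1) * INR (fact (n - i1 - 1))))
     * (4 * a2 * (1 - a2) / (INR (n - i1) * INR (n - i1 - 1))).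
Proof.
  intros Hn Ha2 Ha3 Hi [k Hk].
  destruct k as [| m]; [lia |].
  replace ((n - i1) / 2)%nat with (S m) by (rewrite Hk, Nat.mul_comm, Nat.div_mul; lia).
  eapply Rle_trans; [apply Rabs_lagr_lambda_star_le; lia || lra |].
  replace (n - i1)%nat with (2 * S m)%nat by lia.
  assert (HE : 0 < 1 / (exp 1 * (ln (INR n) - 1))).
  { pose proof (one_lt_ln (INR n) ltac:(apply (le_INR 4) in Hn; simpl in Hn; lra)).
    pose proof (exp_pos 1). apply Rdiv_lt_0_compat; nra. }
  set (E := 1 / (exp 1 * (ln (INR n) - 1))) in *.
  pose proof (INR_fact_lt_0 n). pose proof (INR_fact_lt_0 i1).
  pose proof (INR_fact_lt_0 (2 * S m)). pose proof (INR_fact_lt_0 (2 * S m - 1)).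
  pose proof (lt_0_INR (S m) ltac:(lia)).
  pose proof (lt_0_INR (2 * S m) ltac:(lia)). pose proof (lt_0_INR (2 * S m - 1) ltac:(lia)).
  set (K := E * (INR (fact n) / INR (fact i1)) * (a2 * (1 - a2))).
  replace (E * (INR (fact n) / (INR (fact i1) * INR (fact (2 * S m))))
           * (a2 * (1 - a2) / INR (S m) ^ 2))
    with (K * / (INR (fact (2 * S m)) * INR (S m) ^ 2)) by (unfold K; field; lra).
  replace (E * (INR (fact n) / (INR (fact i1) * INR (fact (2 * S m - 1))))
           * (4 * a2 * (1 - a2) / (INR (2 * S m) * INR (2 * S m - 1))))
    with (K * (4 / (INR (fact (2 * S m - 1)) * (INR (2 * S m) * INR (2 * S m - 1)))))
    by (unfold K; field; lra).
  apply Rmult_le_compat_l; [| apply inv_fact_double_mul_sq_le].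
  apply Rmult_le_pos; [apply Rmult_le_pos, Rlt_le, Rdiv_lt_0_compat | nra]; lra.
Qed.
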